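(* Let $n\ge4$ and let $\mathcal{L}=\{\ell_1,\ldots,\ell_n\}$ be the set of lines of the matroid $L_n$. A partition $\mathcal{Q}=\{Q_1,\ldots,Q_k\}$ of $\mathcal{L}$ is nice if and only if $|Q_i|\notin\{2,3,n-1\}$ for every $i\in[k]$.
   Context: $L_n$ ($n\ge4$) is the rank-three paving matroid on the set of 2-element subsets of $[n]$ (the pairwise intersection points of $n$ general lines in $\mathbb{P}^2$) whose lines (dependent hyperplanes) are $\ell_i=\{\{i,j\}:j\ne i\}$, $i\in[n]$; circuits are 3-subsets of some $\ell_i$ and 4-subsets containing no such 3-subset. For a set $Q$ of at least two lines, $L_n^Q$ is the rank-three paving matroid on $\bigcup_{\ell\in Q}\ell$ whose set of lines is exactly $Q$. Circuit variety of a matroid $N$ on $E$: tuples $(\gamma_e)$ in $\mathbb{C}^3$ with $(\gamma_e)_{e\in S}$ linearly dependent for every dependent $S$. $N$ is liftable if for every tuple $(\gamma_e)$ in $\mathbb{C}^3$ spanning a plane $H$ and every $q\notin H$ there exist scalars $z_e$ with $(\gamma_e+z_eq)$ in the circuit variety of $N$ and not all in a common plane. A partition $\mathcal{Q}$ of $\mathcal{L}$ is nice if (i) $L_n^{Q_i}$ is not liftable for every $i$ with $|Q_i|\ge2$, and (ii) there is no $i$ and line $\ell\notin Q_i$ with $\ell\subseteq\bigcup_{\ell'\in Q_i}\ell'$. *)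

From mathcomp Require Import all_boot all_algebra.
From mathcomp Require Import complex.
From mathcomp Require Import Rstruct.
Set Implicit Arguments. Unset Strict Implicit. Unset Printing Implicit Defensive.
Import GRing.Theory.
Local Open Scope ring_scope.

Definition C := (Rdefinitions.R)[i].
Notation C3 := 'rV[C]_3.

Section PavingRank3.
Variable E : finType.

(* A rank-three paving matroid on the ground set G (a subset of E),
   given by its set of lines Ls (each a subset of G).
   Circuits: 3-subsets of some line, and 4-subsets containing no such 3-subset. *)
Definition in_some_line (Ls : {set {set E}}) (S : {set E}) : bool :=
  [exists L in Ls, S \subset L].

Definition pav3_circuit (G : {set E}) (Ls : {set {set E}}) (X : {set E}) : bool :=
  (X \subset G) &&
  (((#|X| == 3) && in_some_line Ls X) ||
   ((#|X| == 4) &&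
    [forall D : {set E}, ((D \subset X) && (#|D| == 3)) ==> ~~ in_some_line Ls D])).

Definition pav3_dependent (G : {set E}) (Ls : {set {set E}}) (S : {set E}) : bool :=
  (S \subset G) && [exists X : {set E}, (X \subset S) && pav3_circuit G Ls X].

Definition fam (gamma : E -> C3) (S : {set E}) : seq C3 := [seq gamma e | e <- enum S].

Definition in_circuit_variety (G : {set E}) (Ls : {set {set E}}) (gamma : E -> C3) : Prop :=
  forall S : {set E}, pav3_dependent G Ls S -> ~~ free (fam gamma S).

Definition liftable (G : {set E}) (Ls : {set {set E}}) : Prop :=
  forall gamma : E -> C3,
    \dim (span (fam gamma G)) = 2%N ->
    forall q : C3, q \notin span (fam gamma G) ->
      exists z : E -> C,
        in_circuit_variety G Ls (fun e => gamma e + z e *: q) /\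
        \dim (span (fam (fun e => gamma e + z e *: q) G)) = 3%N.

End PavingRank3.

(* The ground set of L_n: 2-element subsets of [n] (here 'I_n). *)
Definition pts (n : nat) : finType := {A : {set 'I_n} | #|A| == 2}.

Definition line (n : nat) (i : 'I_n) : {set pts n} := [set e : pts n | i \in val e].

Definition Lines (n : nat) : {set {set pts n}} := [set line i | i : 'I_n].

Definition liftable_LnQ (n : nat) (Q : {set {set pts n}}) : Prop :=
  liftable (cover Q) Q.

Definition nice (n : nat) (P : {set {set {set pts n}}}) : Prop :=
  (forall Q, Q \in P -> (2 <= #|Q|)%N -> ~ liftable_LnQ Q) /\
  ~ (exists Q l, [/\ Q \in P, l \in Lines n, l \notin Q & l \subset cover Q]).

From mathcomp Require Import all_boot all_algebra.
From mathcomp Require Import complex Rstruct ring.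

(* A block Q violates condition (ii) exactly when it consists of all lines but
   one, l_j: the point {j, k} of l_j lies on no line other than l_j and l_k.
   Two lines (n >= 4) and three lines (n >= 5) are liftable, because some two
   points {a, k1}, {a, k2} of each line l_a lie on no other line of Q. If a line
   spans at most a point of P^2, one of these points can be moved off the plane
   H alone. Otherwise keep the first line in H and lift every other line by a
   shear of H along q fixing its intersection point with the first line; for
   three lines the two shears are scaled to agree at their common point.
   Four lines are never liftable: in the planar configuration quad_xy the
   circuits on the lines force every lift to be a linear function of the
   coordinates, so it stays in a plane. As 3 = n - 1 for n = 4, the forbidden
   block sizes are exactly 2, 3 and n - 1. *)

Set Implicit Arguments. Unset Strict Implicit. Unset Printing Implicit Defensive.
Import GRing.Theory Num.Theory.
Local Open Scope ring_scope.

Lemma dimv_le3 (U : {vspace C3}) : (\dim U <= 3)%N.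
Proof. by have := dimvS (subvf U); rewrite dimvf /dim /= mul1n. Qed.

Section Families.
Variable E : finType.
Implicit Types (g : E -> C3) (S X L : {set E}) (Ls : {set {set E}}).

Lemma mem_cover Ls L e : L \in Ls -> e \in L -> e \in cover Ls.
Proof. by move=> LLs eL; apply/bigcupP; exists L. Qed.

Lemma sub_cover Ls L : L \in Ls -> L \subset cover Ls.
Proof. exact: bigcup_sup. Qed.

Lemma mem_span_fam g S e : e \in S -> g e \in <<fam g S>>%VS.
Proof. by move=> eS; apply/memv_span/map_f; rewrite mem_enum. Qed.

Lemma span_fam_subv g S (U : {vspace C3}) :
  {in S, forall e, g e \in U} -> (<<fam g S>> <= U)%VS.
Proof. by move=> gU; apply/span_subvP => v /mapP[e]; rewrite mem_enum => /gU gU' ->. Qed.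

Lemma free_famS g X S : X \subset S -> free (fam g S) -> free (fam g X).
Proof.
move=> XS; suff /perm_free-> : perm_eq (fam g S) (fam g X ++ fam g (S :\: X)).
  exact: catl_free.
rewrite -map_cat; apply/perm_map/uniq_perm => [||x]; first exact: enum_uniq.
  by rewrite cat_uniq !enum_uniq /= andbT; apply/hasPn => x; rewrite !mem_enum inE => /andP[].
by rewrite mem_cat !mem_enum in_setD; case: (boolP (x \in X)) => //= /(subsetP XS).
Qed.

Lemma circuit_variety_of_planes G Ls g :
  {in Ls, forall L, \dim <<fam g L>> <= 2}%N -> in_circuit_variety G Ls g.
Proof.
move=> planar S /andP[_ /existsP[X /andP[XS /andP[_]]]].
case/orP=> [/andP[/eqP X3 /existsP[L /andP[LLs XL]]] | /andP[/eqP X4 _]].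
  have XL' : (<<fam g X>> <= <<fam g L>>)%VS.
    by apply: span_fam_subv => e /(subsetP XL)/mem_span_fam.
  apply: contraL (planar L LLs) => /(free_famS XS)/eqP; rewrite size_map -cardE X3 => dimX.
  by rewrite -ltnNge; apply: leq_trans (eq_leq (esym dimX)) (dimvS XL').
apply/negP => /eqP; rewrite size_map -cardE => dimS.
have := dimv_le3 <<fam g S>>; rewrite dimS => /(leq_trans (subset_leq_card XS)).
by rewrite X4.
Qed.

Lemma three_on_line_dependent G Ls g L f r0 r1 :
  in_circuit_variety G Ls g -> L \in Ls -> L \subset G ->
  f \in L -> r0 \in L -> r1 \in L -> uniq [:: f; r0; r1] ->
  ~~ free [:: g f; g r0; g r1].
Proof.
move=> cv LLs LG fL r0L r1L uniq3; set S := [set f; r0; r1].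
have enumS : perm_eq (enum S) [:: f; r0; r1].
  by apply: uniq_perm (enum_uniq _) uniq3 _ => e; rewrite mem_enum !inE orbA.
have SL : S \subset L by apply/subsetP => e; rewrite !inE -orbA => /or3P[]/eqP->.
have S3 : #|S| = 3%N by rewrite cardE (perm_size enumS).
rewrite -(perm_free (perm_map g enumS)); apply: cv; rewrite /pav3_dependent.
rewrite (subset_trans SL LG); apply/existsP; exists S; rewrite subxx /pav3_circuit.
rewrite (subset_trans SL LG) S3 eqxx /in_some_line /=.
by apply/orP; left; apply/existsP; exists L; rewrite LLs SL.
Qed.

End Families.

Definition lift_by (E : finType) (g : E -> C3) (q : C3) (z : E -> C) : E -> C3 :=
  fun e => g e + z e *: q.

Definition lifts_to (E : finType) (G : {set E}) (Ls : {set {set E}}) (g : E -> C3) (q : C3) :=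
  exists z : E -> C, in_circuit_variety G Ls (lift_by g q z) /\
                     \dim <<fam (lift_by g q z) G>> = 3%N.

Lemma exists_proportional (R : comNzRingType) (a b : R) :
  exists l m : R, l * a = m * b /\ (l != 0 \/ m != 0).
Proof.
have [->|a_neq0] := eqVneq a 0; last by exists b, a; split; [exact: mulrC | right].
by exists 1, 0; rewrite mul0r mulr0; split; [|left; exact: oner_neq0].
Qed.

Section Tilt.
Variables (K : fieldType) (vT : vectType K).
Implicit Types (u w q v : vT).

Definition first_coord u w v : K := coord [tuple u; w] ord0 v.

(* [v |-> v - l * first_coord u w v *: q] is linear and fixes [w]: it shears the
   plane spanned by [u] and [w] onto the plane spanned by [u - l *: q] and [w]. *)
Lemma tilt_mem u w q v (l : K) : v \in <<[:: u; w]>>%VS ->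
  v - (l * first_coord u w v) *: q \in <<[:: u - l *: q; w]>>%VS.
Proof.
move=> vuw; rewrite {1}(coord_span vuw) big_ord_recl big_ord1 /= /first_coord.
set a := coord _ ord0 v; set b := coord _ _ v.
have -> : a *: u + b *: w - (l * a) *: q = a *: (u - l *: q) + b *: w.
  by rewrite scalerBr scalerA mulrC addrAC.
by apply: memvD; apply: memvZ; apply: memv_span; rewrite !inE eqxx ?orbT.
Qed.

Lemma first_coord_head u w : free [:: u; w] -> first_coord u w u = 1.
Proof. by move=> uw; rewrite /first_coord (coord_free ord0 ord0 (X := [tuple u; w])). Qed.

Lemma first_coord_line u w v : free [:: u; w] -> v \in <[w]>%VS -> first_coord u w v = 0.
Proof.
move=> uw /vlineP[k ->]; rewrite /first_coord linearZ /=.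
by have := coord_free (lift ord0 ord0) ord0 uw; rewrite /= => ->; rewrite mulr0.
Qed.

End Tilt.

Section Lifting.
Variables (E : finType) (Ls : {set {set E}}) (g : E -> C3) (q : C3).
Local Notation G := (cover Ls).
Local Notation H := <<fam g G>>%VS.
Hypotheses (dimH : \dim H = 2%N) (qNH : q \notin H).

Lemma span_line_full (L : {set E}) : L \in Ls -> (2 <= \dim <<fam g L>>)%N -> (H <= <<fam g L>>)%VS.
Proof.
move=> LLs dimL; have LH : (<<fam g L>> <= H)%VS.
  by apply: span_fam_subv => e /(mem_cover LLs)/mem_span_fam.
by rewrite -(geq_leqif (dimv_leqif_sup LH)) dimH.
Qed.

Lemma dim_lift_full (z : E -> C) (S : {set E}) e : S \subset G -> {in S, forall f, z f = 0} ->
  (H <= <<fam g S>>)%VS -> e \in G -> z e != 0 ->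
  \dim <<fam (lift_by g q z) G>> = 3%N.
Proof.
move=> SG zS HS eG ze; set W := <<fam (lift_by g q z) G>>%VS.
have HW : (H <= W)%VS.
  apply: subv_trans HS (span_fam_subv _) => f fS.
  by have := mem_span_fam (lift_by g q z) (subsetP SG f fS); rewrite /lift_by zS // scale0r addr0.
have qW : q \in W.
  have := memvB (mem_span_fam (lift_by g q z) eG) (subvP HW _ (mem_span_fam g eG)).
  by rewrite /lift_by addrC addKr => /(memvZ (z e)^-1); rewrite scalerA mulVf // scale1r.
apply/eqP; rewrite eqn_leq dimv_le3 /=; apply: contraR qNH; rewrite -ltnNge ltnS => dimW.
by have /eqP-> : H == W by rewrite eqEdim HW dimH.
Qed.

Lemma dim_untilted_line (z : E -> C) (L : {set E}) : L \subset G ->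
  {in L, forall f, z f = 0} -> (\dim <<fam (lift_by g q z) L>> <= 2)%N.
Proof.
move=> LG zL; suff liftH : (<<fam (lift_by g q z) L>> <= H)%VS.
  by rewrite (leq_trans (dimvS liftH)) ?dimH.
apply: span_fam_subv => f fL.
by rewrite /lift_by zL // scale0r addr0 mem_span_fam // (subsetP LG).
Qed.

Lemma dim_tilted_line (z : E -> C) (L : {set E}) u w (l : C) : L \subset G ->
  (H <= <<[:: u; w]>>)%VS ->
  {in L, forall f, z f = - (l * first_coord u w (g f))} ->
  (\dim <<fam (lift_by g q z) L>> <= 2)%N.
Proof.
move=> LG Huw zL.
apply: leq_trans (dimvS (span_fam_subv (U := <<[:: u - l *: q; w]>>%VS) _)) (dim_span _) => f fL.
rewrite /lift_by zL // scaleNr; apply: tilt_mem.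
by apply: subvP Huw _ _; rewrite mem_span_fam // (subsetP LG).
Qed.

Lemma lift_private_point (l : {set E}) e :
  l \in Ls -> e \in l -> (forall L, L \in Ls -> e \in L -> L = l) ->
  (\dim <<fam g l>> <= 1)%N -> g e \in <<fam g (G :\ e)>>%VS -> lifts_to G Ls g q.
Proof.
move=> lLs el e_only diml ge; pose z f : C := (f == e)%:R.
exists z; split.
  apply: circuit_variety_of_planes => L LLs; have [->|Ll] := eqVneq L l.
    apply: leq_trans (dimvS (_ : _ <= <<fam g l>> + <[q]>)%VS) _.
      apply: span_fam_subv => f fl; apply: memv_add; first exact: mem_span_fam.
      exact/memvZ/memv_line.
    apply: leq_trans (dimv_add_leqif _ _).1 _; rewrite dim_vline.
    exact: (leq_add diml (leq_b1 _)).
  apply: dim_untilted_line (sub_cover LLs) _ => f fL.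
  have fe : f != e by apply: contra_neq Ll => fe; apply: e_only; rewrite -?fe.
  by rewrite /z (negbTE fe).
apply: (dim_lift_full (S := G :\ e) (e := e)); rewrite ?subsetDl ?(mem_cover lLs) //.
- by move=> f; rewrite in_setD1 /z => /andP[/negbTE-> _].
- apply: span_fam_subv => f fG; have [-> //|fe] := eqVneq f e.
  by apply: mem_span_fam; rewrite in_setD1 fe.
- by rewrite /z eqxx oner_eq0.
Qed.

Lemma lift_degenerate_line (l : {set E}) e1 e2 :
  l \in Ls -> e1 \in l -> e2 \in l -> e1 != e2 ->
  (forall L, L \in Ls -> e1 \in L -> L = l) -> (forall L, L \in Ls -> e2 \in L -> L = l) ->
  (\dim <<fam g l>> <= 1)%N -> lifts_to G Ls g q.
Proof.
move=> lLs e1l e2l e12 e1_only e2_only diml.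
have [|g1] := boolP (g e1 \in <<fam g (G :\ e1)>>%VS).
  exact: lift_private_point lLs e1l e1_only diml.
have [|g2] := boolP (g e2 \in <<fam g (G :\ e2)>>%VS).
  exact: lift_private_point lLs e2l e2_only diml.
(* otherwise g e2 <> 0 spans the degenerate line, which contains g e1 *)
case/negP: g1; have g2_neq0 : g e2 != 0 by apply: contraNneq g2 => ->; apply: mem0v.
have e2_span : (<[g e2]> <= <<fam g l>>)%VS by rewrite -memvE mem_span_fam.
have := geq_leqif (dimv_leqif_sup e2_span); rewrite dim_vline g2_neq0 diml => /esym l_line.
apply: subvP (subv_trans l_line _) _ (mem_span_fam g e1l).
by rewrite -memvE mem_span_fam // in_setD1 eq_sym e12 (mem_cover lLs).
Qed.

Lemma exists_tilt_basis x (L : {set E}) : x \in H -> L \subset G ->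
  (2 <= \dim <<fam g L>>)%N ->
  exists e w, [/\ e \in L, free [:: g e; w], x \in <[w]>%VS & (H <= <<[:: g e; w]>>)%VS].
Proof.
move=> xH LG dimL.
have [w [w_neq0 wH xw]] : exists w, [/\ w != 0, w \in H & x \in <[w]>%VS].
  have [->|x_neq0] := eqVneq x 0; last by exists x; rewrite x_neq0 xH memv_line.
  by exists (vpick H); rewrite mem0v memv_pick vpick0 -dimv_eq0 dimH.
have [e /andP[eL ew]|w_line] := pickP [pred e in L | g e \notin <[w]>%VS]; last first.
  have: (<<fam g L>> <= <[w]>)%VS.
    by apply: span_fam_subv => e eL; have := w_line e; rewrite /= eL => /negbFE.
  by move/dimvS; rewrite dim_vline w_neq0 leqNgt dimL.
have ew_free : free [:: g e; w] by rewrite free_cons span_seq1 ew seq1_free.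
exists e, w; split=> //.
have ewH : (<<[:: g e; w]>> <= H)%VS.
  by apply/span_subvP => v; rewrite !inE => /orP[]/eqP->; rewrite ?wH ?mem_span_fam ?(subsetP LG).
by rewrite -(geq_leqif (dimv_leqif_sup ewH)) dimH (eqP ew_free).
Qed.

Lemma lift_two_lines (l1 l2 : {set E}) c :
  l1 \in Ls -> l2 \in Ls -> Ls \subset [set l1; l2] -> c \in l1 ->
  (forall f, f \in l1 -> f \in l2 -> f = c) ->
  (2 <= \dim <<fam g l1>>)%N -> (2 <= \dim <<fam g l2>>)%N -> lifts_to G Ls g q.
Proof.
move=> l1Ls l2Ls Ls12 cl1 l1l2 diml1 diml2.
have [e [w [el2 ew_free cw Hew]]] :=
  exists_tilt_basis (mem_span_fam g (mem_cover l1Ls cl1)) (sub_cover l2Ls) diml2.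
pose t f := first_coord (g e) w (g f).
pose z f := if f \in l2 then - t f else 0.
have z_l1 : {in l1, forall f, z f = 0}.
  move=> f fl1; rewrite /z; case: ifP => // /(l1l2 f fl1)->.
  by rewrite /t first_coord_line // oppr0.
exists z; split.
  apply: circuit_variety_of_planes => L /(subsetP Ls12); rewrite !inE => /orP[]/eqP->.
    exact: dim_untilted_line (sub_cover l1Ls) z_l1.
  by apply: (dim_tilted_line (l := 1) (sub_cover l2Ls) Hew) => f fl2; rewrite /z fl2 mul1r.
apply: (dim_lift_full (sub_cover l1Ls) z_l1 (span_line_full l1Ls diml1) (mem_cover l2Ls el2)).
by rewrite /z el2 /t first_coord_head // oppr_eq0 oner_eq0.
Qed.

Lemma lift_three_lines (l1 l2 l3 : {set E}) c12 c13 c23 :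
  l1 \in Ls -> l2 \in Ls -> l3 \in Ls -> Ls \subset [set l1; l2; l3] ->
  c12 \in l1 -> c13 \in l1 ->
  (forall f, f \in l1 -> f \in l2 -> f = c12) ->
  (forall f, f \in l1 -> f \in l3 -> f = c13) ->
  (forall f, f \in l2 -> f \in l3 -> f = c23) ->
  (2 <= \dim <<fam g l1>>)%N -> (2 <= \dim <<fam g l2>>)%N -> (2 <= \dim <<fam g l3>>)%N ->
  lifts_to G Ls g q.
Proof.
move=> l1Ls l2Ls l3Ls Ls123 c12l1 c13l1 l1l2 l1l3 l2l3 diml1 diml2 diml3.
have [e2 [w2 [e2l2 ew2_free cw2 Hew2]]] :=
  exists_tilt_basis (mem_span_fam g (mem_cover l1Ls c12l1)) (sub_cover l2Ls) diml2.
have [e3 [w3 [e3l3 ew3_free cw3 Hew3]]] :=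
  exists_tilt_basis (mem_span_fam g (mem_cover l1Ls c13l1)) (sub_cover l3Ls) diml3.
pose t2 f := first_coord (g e2) w2 (g f).
pose t3 f := first_coord (g e3) w3 (g f).
(* the tilts of l2 and l3 must agree at their common point c23 *)
have [l [m [lm lm_neq0]]] := exists_proportional (t2 c23) (t3 c23).
pose z f := if f \in l2 then - (l * t2 f) else if f \in l3 then - (m * t3 f) else 0.
have z_l1 : {in l1, forall f, z f = 0}.
  move=> f fl1; rewrite /z; case: ifP => [/(l1l2 f fl1)->|_].
    by rewrite /t2 first_coord_line // mulr0 oppr0.
  case: ifP => // /(l1l3 f fl1)->.
  by rewrite /t3 first_coord_line // mulr0 oppr0.
have z_l2 : {in l2, forall f, z f = - (l * t2 f)} by move=> f fl2; rewrite /z fl2.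
have z_l3 : {in l3, forall f, z f = - (m * t3 f)}.
  by move=> f fl3; rewrite /z fl3; case: ifP => // /l2l3/(_ fl3)->; rewrite lm.
exists z; split.
  apply: circuit_variety_of_planes => L /(subsetP Ls123).
  rewrite !inE -orbA => /or3P[]/eqP->.
  - exact: dim_untilted_line (sub_cover l1Ls) z_l1.
  - exact: dim_tilted_line (sub_cover l2Ls) Hew2 z_l2.
  - exact: dim_tilted_line (sub_cover l3Ls) Hew3 z_l3.
have lift_l1 := dim_lift_full (sub_cover l1Ls) z_l1 (span_line_full l1Ls diml1).
case: lm_neq0 => [l_neq0|m_neq0].
  apply: lift_l1 (mem_cover l2Ls e2l2) _.
  by rewrite z_l2 // /t2 first_coord_head // mulr1 oppr_eq0.
apply: lift_l1 (mem_cover l3Ls e3l3) _.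
by rewrite z_l3 // /t3 first_coord_head // mulr1 oppr_eq0.
Qed.

End Lifting.

Definition vec (x y w : C) : C3 := \row_(k < 3) [:: x; y; w]`_k.

Lemma vec_lin k1 k2 x1 y1 w1 x2 y2 w2 :
  k1 *: vec x1 y1 w1 + k2 *: vec x2 y2 w2 =
  vec (k1 * x1 + k2 * x2) (k1 * y1 + k2 * y2) (k1 * w1 + k2 * w2).
Proof. by apply/rowP => k; rewrite !mxE; case: k => [[|[|[|]]] ?]. Qed.

Lemma vec_plane x y w : vec x y 0 + w *: vec 0 0 1 = vec x y w.
Proof.
by apply/rowP => k; rewrite !mxE; case: k => [[|[|[|]]] ?] //=; rewrite ?mulr0 ?addr0 ?mulr1 ?add0r.
Qed.

Lemma vec_inj x y w x' y' w' : vec x y w = vec x' y' w' -> [/\ x = x', y = y' & w = w'].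
Proof.
move=> e; have entry k : vec x y w ord0 k = vec x' y' w' ord0 k by rewrite e.
by split; [move: (entry ord0) | move: (entry (lift ord0 ord0)) | move: (entry ord_max)];
  rewrite !mxE.
Qed.

Definition frame (a b : C) : seq C3 := [:: vec 1 0 a; vec 0 1 b].

Lemma mem_span_frame a b x y w :
  (vec x y w \in <<frame a b>>%VS) = (w == x * a + y * b).
Proof.
apply/idP/eqP => [|->].
  rewrite span_cons span_seq1 => /memv_addP[_ /vlineP[k1 ->] [_ /vlineP[k2 ->]]].
  by rewrite vec_lin => /vec_inj[-> -> ->]; rewrite !mulr1 !mulr0 addr0 add0r.
have -> : vec x y (x * a + y * b) = x *: vec 1 0 a + y *: vec 0 1 b.
  by rewrite vec_lin !mulr1 !mulr0 addr0 add0r.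
by apply: memvD; apply: memvZ; apply: memv_span; rewrite !inE eqxx ?orbT.
Qed.

Lemma free_frame a b : free (frame a b).
Proof.
rewrite free_cons seq1_free span_seq1; apply/andP; split.
  apply/vlineP => -[k] /(congr1 (fun v : C3 => v ord0 ord0)).
  by rewrite !mxE /= mulr0 => /eqP; rewrite oner_eq0.
apply/eqP => /(congr1 (fun v : C3 => v ord0 (lift ord0 ord0))).
by rewrite !mxE /= => /eqP; rewrite oner_eq0.
Qed.

Section PlanarConfigurations.
Variables (E : finType) (Ls : {set {set E}}) (xy : E -> C * C).
Local Notation G := (cover Ls).

Definition flat (e : E) : C3 := vec (xy e).1 (xy e).2 0.
Local Notation e3 := (vec 0 0 1).

Lemma lift_flat (z : E -> C) e : lift_by flat e3 z e = vec (xy e).1 (xy e).2 (z e).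
Proof. exact: vec_plane. Qed.

Lemma lift_on_line (z : E -> C) L r0 r1 :
  in_circuit_variety G Ls (lift_by flat e3 z) -> L \in Ls -> r0 \in L -> r1 \in L ->
  xy r0 = (1, 0) -> xy r1 = (0, 1) ->
  {in L, forall f, z f = (xy f).1 * z r0 + (xy f).2 * z r1}.
Proof.
move=> cv LLs r0L r1L xy0 xy1 f fL.
have [->|f_r0] := eqVneq f r0; first by rewrite xy0 /= mul1r mul0r addr0.
have [->|f_r1] := eqVneq f r1; first by rewrite xy1 /= mul1r mul0r add0r.
have r01 : r0 != r1.
  by apply/eqP => r01; move: xy1; rewrite -r01 xy0; case=> /eqP; rewrite oner_eq0.
have := three_on_line_dependent cv LLs (sub_cover LLs) fL r0L r1L.
rewrite /= !inE negb_or f_r0 f_r1 r01 => /(_ isT).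
rewrite !lift_flat xy0 xy1 /= free_cons -/(frame (z r0) (z r1)) free_frame andbT.
by rewrite mem_span_frame negbK => /eqP.
Qed.

Lemma not_liftable_of_rigid r0 r1 : r0 \in G -> r1 \in G -> xy r0 = (1, 0) -> xy r1 = (0, 1) ->
  (forall z : E -> C, in_circuit_variety G Ls (lift_by flat e3 z) ->
     exists a b, {in G, forall f, z f = (xy f).1 * a + (xy f).2 * b}) ->
  ~ liftable G Ls.
Proof.
move=> r0G r1G xy0 xy1 rigid lift.
have flat_plane : <<fam flat G>>%VS = <<frame 0%R 0%R>>%VS.
  apply/eqP; rewrite eqEsubv; apply/andP; split.
    by apply: span_fam_subv => f _; rewrite mem_span_frame !mulr0 addr0.
  apply/span_subvP => v; rewrite !inE => /orP[]/eqP->.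
    by have := mem_span_fam flat r0G; rewrite /flat xy0.
  by have := mem_span_fam flat r1G; rewrite /flat xy1.
have [||z [cv dim3]] := lift flat _ e3 _.
- by rewrite flat_plane (eqP (free_frame 0 0)).
- by rewrite flat_plane mem_span_frame !mulr0 addr0 oner_eq0.
have [a [b zab]] := rigid z cv.
have : (<<fam (lift_by flat e3 z) G>> <= <<frame a b>>)%VS.
  by apply: span_fam_subv => f fG; rewrite lift_flat mem_span_frame zab.
by move/dimvS; rewrite dim3 (eqP (free_frame a b)).
Qed.

End PlanarConfigurations.

Lemma exists_set3 (T : finType) (A : {set T}) : #|A| = 3%N ->
  exists a b c, [/\ a != b, a != c, b != c & A = [set a; b; c]].
Proof.
move=> A3; have [a aA] : exists a, a \in A by apply/card_gt0P; rewrite A3.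
have /cards2P[b [c [bc Aa]]] : #|A :\ a| == 2 by rewrite (cardsD1 a) aA add1n in A3; case: A3 => ->.
have : (b \in A :\ a) && (c \in A :\ a) by rewrite Aa !inE !eqxx orbT.
rewrite !in_setD1 => /andP[/andP[ba _] /andP[ca _]].
by exists a, b, c; rewrite -(setD1K aA) Aa setUA !(eq_sym a) ba ca bc.
Qed.

Lemma exists_uniq4 (T : finType) (A : {set T}) : (3 < #|A|)%N ->
  exists a b c d, uniq [:: a; b; c; d] /\ {subset [:: a; b; c; d] <= A}.
Proof.
rewrite cardE; have := enum_uniq A; have := mem_enum A.
case: (enum A) => [|a [|b [|c [|d s]]]] // memA uniqA _.
exists a, b, c, d; split; first by have := take_uniq 4 uniqA; rewrite /= take0.
by move=> x xs; rewrite -memA; apply: (mem_take (n0 := 4)); rewrite /= take0.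
Qed.

Section PointsOfLn.
Variable n : nat.
Implicit Types (Q : {set {set pts n}}) (i j k : 'I_n).

Lemma card_pair i j : i != j -> #|[set i; j]| == 2.
Proof. by rewrite cards2 => ->. Qed.

Definition pt i j (ij : i != j) : pts n :=
  exist (fun A : {set 'I_n} => #|A| == 2) [set i; j] (card_pair ij).

Lemma pt_in_line i j (ij : i != j) k : (pt ij \in line k) = (k == i) || (k == j).
Proof. by rewrite !inE. Qed.

Lemma val_pt i j (ij : i != j) : val (pt ij) = [set i; j].
Proof. by []. Qed.

Lemma pt_in_linel i j (ij : i != j) : pt ij \in line i.
Proof. by rewrite pt_in_line eqxx. Qed.

Lemma pt_in_liner i j (ij : i != j) : pt ij \in line j.
Proof. by rewrite pt_in_line eqxx orbT. Qed.

Lemma eq_pt (f : pts n) i j (ij : i != j) : i \in val f -> j \in val f -> f = pt ij.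
Proof.
move=> if_ jf; apply: val_inj; apply/eqP.
rewrite eq_sym eqEcard (eqP (valP f)) (eqP (card_pair ij)) andbT.
by apply/subsetP => k; rewrite !inE => /orP[]/eqP->.
Qed.

Lemma line_pt (f : pts n) k : f \in line k -> exists j (kj : k != j), f = pt kj.
Proof.
rewrite inE; have /cards2P[x [y [xy fxy]]] := valP f; rewrite fxy !inE.
case/orP=> /eqP->; [exists y, xy | exists x; rewrite eq_sym in xy; exists xy];
  by apply: eq_pt; rewrite fxy !inE eqxx ?orbT.
Qed.

Lemma in_Lines L : L \in Lines n -> exists i, L = line i.
Proof. by case/imsetP=> i _ ->; exists i. Qed.

Definition line_idx Q : {set 'I_n} := [set i | line i \in Q].

Lemma pt_private Q i k (ik : i != k) L :
  Q \subset Lines n -> line k \notin Q -> L \in Q -> pt ik \in L -> L = line i.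
Proof.
move=> QL kQ LQ; have [j Lj] := in_Lines (subsetP QL L LQ).
rewrite Lj pt_in_line => /orP[]/eqP jE; first by rewrite jE.
by rewrite -jE -Lj LQ in kQ.
Qed.

Lemma line_sub_cover Q j : Q \subset Lines n -> line j \notin Q ->
  (line j \subset cover Q) = (line_idx Q == [set~ j]).
Proof.
move=> QL jQ; apply/idP/eqP => [jcov | idxE].
  apply/setP => k; rewrite in_setC1 inE; have [->|kj] := eqVneq k j; first exact: negbTE.
  have /bigcupP[L LQ] := subsetP jcov _ (pt_in_liner kj).
  by move=> /(pt_private QL jQ LQ) <-.
apply/subsetP => f /line_pt[k [jk ->]].
apply: (mem_cover (L := line k)); last exact: pt_in_liner.
by have := in_setC1 k j; rewrite -idxE inE eq_sym jk.
Qed.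

Hypothesis n_gt2 : (2 < n)%N.

Lemma line_inj : injective (@line n).
Proof.
move=> i j ij; apply/eqP; apply: contraT => i_neq_j.
have /card_gt0P[k] : (0 < #|~: [set i; j]|)%N.
  by rewrite -(ltn_add2l #|[set i; j]|) addn0 cardsC card_ord cards2 i_neq_j.
rewrite !inE negb_or => /andP[ki kj]; rewrite eq_sym in ki.
by have := pt_in_linel ki; rewrite ij pt_in_line eq_sym (negbTE i_neq_j) eq_sym (negbTE kj).
Qed.

Lemma imset_line_idx Q : Q \subset Lines n -> Q = @line n @: line_idx Q.
Proof.
move=> QL; apply/setP => L; apply/idP/imsetP => [LQ | [i + ->]]; last by rewrite inE.
by have [i Li] := in_Lines (subsetP QL L LQ); exists i; rewrite // inE -Li.
Qed.

Lemma card_line_idx Q : Q \subset Lines n -> #|Q| = #|line_idx Q|.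
Proof. by move=> QL; rewrite {1}(imset_line_idx QL) card_imset //; exact: line_inj. Qed.

Lemma covers_other_line Q : Q \subset Lines n ->
  (exists l, [/\ l \in Lines n, l \notin Q & l \subset cover Q]) <-> #|Q| = n.-1.
Proof.
move=> QL; rewrite card_line_idx //; split=> [[_ [/imsetP[j _ ->] jQ]]|idx_card].
  by rewrite line_sub_cover // => /eqP->; rewrite cardsC1 card_ord.
have /card_gt0P[j] : (0 < #|~: line_idx Q|)%N.
  rewrite -(ltn_add2l #|line_idx Q|) addn0 cardsC card_ord idx_card ltn_predL.
  exact: ltn_trans n_gt2.
rewrite !inE => jQ; exists (line j); split=> //; first exact: imset_f.
rewrite line_sub_cover // eqEcard cardsC1 card_ord idx_card leqnn andbT.
by apply/subsetP => k; rewrite in_setC1; apply: contraTneq => ->; rewrite inE.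
Qed.

Lemma Lines_card2 Q : Q \subset Lines n -> #|Q| = 2 ->
  exists a b, a != b /\ Q = [set line a; line b].
Proof.
move=> QL; rewrite card_line_idx // => /eqP/cards2P[a [b [ab idxE]]].
by exists a, b; rewrite (imset_line_idx QL) idxE imsetU1 imset_set1.
Qed.

Lemma Lines_card3 Q : Q \subset Lines n -> #|Q| = 3 ->
  exists a b c, [/\ a != b, a != c, b != c & Q = [set line a; line b; line c]].
Proof.
move=> QL; rewrite card_line_idx // => /exists_set3[a [b [c [ab ac bc idxE]]]].
by exists a, b, c; rewrite (imset_line_idx QL) idxE imsetU imsetU1 !imset_set1.
Qed.

Lemma two_lines_outside Q : Q \subset Lines n -> (#|Q|.+2 <= n)%N ->
  exists k1 k2, [/\ k1 != k2, line k1 \notin Q & line k2 \notin Q].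
Proof.
move=> QL Q_small; have : (1 < #|~: line_idx Q|)%N.
  by rewrite -(ltn_add2l #|line_idx Q|) cardsC card_ord -card_line_idx // addn1.
by case/card_gt1P=> k1 [k2 [k1Q k2Q k12]]; exists k1, k2; rewrite !inE in k1Q k2Q.
Qed.

Lemma lift_degenerate_line_Ln Q g q a k1 k2 :
  Q \subset Lines n -> line a \in Q -> k1 != k2 -> line k1 \notin Q -> line k2 \notin Q ->
  \dim <<fam g (cover Q)>> = 2%N -> q \notin <<fam g (cover Q)>>%VS ->
  (\dim <<fam g (line a)>> <= 1)%N -> lifts_to (cover Q) Q g q.
Proof.
move=> QL aQ k12 k1Q k2Q dimH qNH diml.
have ak1 : a != k1 by apply: contraNneq k1Q => <-.
have ak2 : a != k2 by apply: contraNneq k2Q => <-.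
apply: (lift_degenerate_line dimH qNH aQ (pt_in_linel ak1) (pt_in_linel ak2) _
          (fun L LQ => pt_private QL k1Q LQ) (fun L LQ => pt_private QL k2Q LQ) diml).
apply/eqP => /(congr1 (fun f : pts n => k1 \in val f)).
by rewrite /= !inE eqxx orbT eq_sym (negbTE ak1) (negbTE k12).
Qed.

End PointsOfLn.

Lemma liftable_two_lines n (Q : {set {set pts n}}) :
  (3 < n)%N -> Q \subset Lines n -> #|Q| = 2 -> liftable_LnQ Q.
Proof.
move=> n_gt3 QL Q2 g dimH q qNH; have n_gt2 := ltnW n_gt3.
have [|k1 [k2 [k12 k1Q k2Q]]] := two_lines_outside n_gt2 QL; first by rewrite Q2.
have [a [b [ab QE]]] := Lines_card2 n_gt2 QL Q2.
have aQ : line a \in Q by rewrite QE !inE eqxx.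
have bQ : line b \in Q by rewrite QE !inE eqxx orbT.
have [diml|diml] := leqP (\dim <<fam g (line a)>>) 1.
  exact: lift_degenerate_line_Ln QL aQ k12 k1Q k2Q dimH qNH diml.
have [dimm|dimm] := leqP (\dim <<fam g (line b)>>) 1.
  exact: lift_degenerate_line_Ln QL bQ k12 k1Q k2Q dimH qNH dimm.
apply: (lift_two_lines dimH qNH aQ bQ _ (pt_in_linel ab)) diml dimm; first by rewrite QE.
by move=> f /[!inE] fa fb; apply: eq_pt.
Qed.

Lemma liftable_three_lines n (Q : {set {set pts n}}) :
  (4 < n)%N -> Q \subset Lines n -> #|Q| = 3 -> liftable_LnQ Q.
Proof.
move=> n_gt4 QL Q3 g dimH q qNH; have n_gt2 := ltnW (ltnW n_gt4).
have [|k1 [k2 [k12 k1Q k2Q]]] := two_lines_outside n_gt2 QL; first by rewrite Q3.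
have [a [b [c [ab ac bc QE]]]] := Lines_card3 n_gt2 QL Q3.
have aQ : line a \in Q by rewrite QE !inE eqxx.
have bQ : line b \in Q by rewrite QE !inE eqxx orbT.
have cQ : line c \in Q by rewrite QE !inE eqxx !orbT.
have [dima|dima] := leqP (\dim <<fam g (line a)>>) 1.
  exact: lift_degenerate_line_Ln QL aQ k12 k1Q k2Q dimH qNH dima.
have [dimb|dimb] := leqP (\dim <<fam g (line b)>>) 1.
  exact: lift_degenerate_line_Ln QL bQ k12 k1Q k2Q dimH qNH dimb.
have [dimc|dimc] := leqP (\dim <<fam g (line c)>>) 1.
  exact: lift_degenerate_line_Ln QL cQ k12 k1Q k2Q dimH qNH dimc.
apply: (lift_three_lines dimH qNH aQ bQ cQ _ (pt_in_linel ab) (pt_in_linel ac)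
          _ _ _ dima dimb dimc); first by rewrite QE.
- by move=> f /[!inE] fa fb; apply: eq_pt.
- by move=> f /[!inE] fa fc; apply: eq_pt.
- by move=> f /[!inE] fb fc; apply: (eq_pt (j := c) bc).
Qed.

Lemma neq_eqF (T : eqType) (x y : T) : x != y -> ((x == y) = false) * ((y == x) = false).
Proof. by move=> /negbTE xy; split; rewrite // eq_sym. Qed.

Lemma quad_relations (R : numFieldType) (p q r s : R) :
  p + q = r + s -> p + s = r + q -> q = s /\ p = r.
Proof.
move=> e1 e2; have qs : q = s.
  have : (q - s) * 2 = (p + q - (r + s)) - (p + s - (r + q)) by ring.
  by rewrite e1 e2 !subrr => /eqP; rewrite mulf_eq0 pnatr_eq0 orbF subr_eq0 => /eqP.
by split=> //; apply: (addIr q); rewrite e1 qs addrC.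
Qed.

Section FourLines.
Variables (n : nat) (Q : {set {set pts n}}) (a b c d : 'I_n).
Hypotheses (QL : Q \subset Lines n) (aQ : line a \in Q) (bQ : line b \in Q)
  (cQ : line c \in Q) (dQ : line d \in Q).
Hypotheses (ab : a != b) (ac : a != c) (ad : a != d) (bc : b != c) (bd : b != d) (cd : c != d).

(* On each of the four lines two points sit at (1,0) and (0,1); the points
   ac and bd sit at (1,1), which forces z(ad) = z(bc) and z(ab) = z(cd). *)
Definition quad_xy (f : pts n) : C * C :=
  if a \in val f then (if d \in val f then (0, 1) else if c \in val f then (1, 1) else (1, 0))
  else if b \in val f then (if d \in val f then (1, 1) else (0, 1)) else (1, 0).

Let neqs := (neq_eqF ab, neq_eqF ac, neq_eqF ad, neq_eqF bc, neq_eqF bd, neq_eqF cd).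

Lemma quad_xy_frame : quad_xy (pt ab) = (1, 0) /\ quad_xy (pt ad) = (0, 1).
Proof. by rewrite /quad_xy !val_pt !inE !eqxx ?neqs. Qed.

Lemma quad_rigid (z : pts n -> C) :
  in_circuit_variety (cover Q) Q (lift_by (flat quad_xy) (vec 0 0 1) z) ->
  {in cover Q, forall f, z f = (quad_xy f).1 * z (pt ab) + (quad_xy f).2 * z (pt ad)}.
Proof.
move=> cv; have [xy_ab xy_ad] := quad_xy_frame.
have xy_bc : quad_xy (pt bc) = (0, 1) by rewrite /quad_xy !val_pt !inE !eqxx ?neqs.
have xy_cd : quad_xy (pt cd) = (1, 0) by rewrite /quad_xy !val_pt !inE !eqxx ?neqs.
have xy_ac : quad_xy (pt ac) = (1, 1) by rewrite /quad_xy !val_pt !inE !eqxx ?neqs.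
have xy_bd : quad_xy (pt bd) = (1, 1) by rewrite /quad_xy !val_pt !inE !eqxx ?neqs.
have zA := lift_on_line cv aQ (pt_in_linel ab) (pt_in_linel ad) xy_ab xy_ad.
have zB := lift_on_line cv bQ (pt_in_liner ab) (pt_in_linel bc) xy_ab xy_bc.
have zC := lift_on_line cv cQ (pt_in_linel cd) (pt_in_liner bc) xy_cd xy_bc.
have zD := lift_on_line cv dQ (pt_in_liner cd) (pt_in_liner ad) xy_cd xy_ad.
have e_ac : z (pt ab) + z (pt ad) = z (pt cd) + z (pt bc).
  by have := zA _ (pt_in_linel ac); rewrite (zC _ (pt_in_liner ac)) xy_ac /= !mul1r => ->.
have e_bd : z (pt ab) + z (pt bc) = z (pt cd) + z (pt ad).
  by have := zB _ (pt_in_linel bd); rewrite (zD _ (pt_in_liner bd)) xy_bd /= !mul1r => ->.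
have [z_bc z_cd] := quad_relations e_ac e_bd.
move=> f /bigcupP[L LQ fL]; have [i Li] := in_Lines (subsetP QL L LQ).
rewrite {}Li in LQ fL.
have [ia | ia] := eqVneq i a; first by rewrite ia in fL; exact: zA.
have [ib | ib] := eqVneq i b; first by rewrite ib in fL; rewrite zB // z_bc.
have [ic | ic] := eqVneq i c; first by rewrite ic in fL; rewrite zC // -z_bc -z_cd.
have [id | id] := eqVneq i d; first by rewrite id in fL; rewrite zD // -z_cd.
have ai : a != i by rewrite eq_sym.
have bi : b != i by rewrite eq_sym.
have neqs_i := (neq_eqF ia, neq_eqF ib, neq_eqF ic, neq_eqF id).
have xy_ai : quad_xy (pt ai) = (1, 0) by rewrite /quad_xy !val_pt !inE !eqxx ?neqs ?neqs_i.
have xy_bi : quad_xy (pt bi) = (0, 1) by rewrite /quad_xy !val_pt !inE !eqxx ?neqs ?neqs_i.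
have z_ai : z (pt ai) = z (pt ab) by rewrite (zA _ (pt_in_linel ai)) xy_ai /= mul1r mul0r addr0.
have z_bi : z (pt bi) = z (pt ad) by rewrite (zB _ (pt_in_linel bi)) xy_bi /= mul1r mul0r add0r.
by rewrite (lift_on_line cv LQ (pt_in_liner ai) (pt_in_liner bi) xy_ai xy_bi fL) z_ai z_bi.
Qed.

Lemma not_liftable_four_lines : ~ liftable_LnQ Q.
Proof.
have [xy_ab xy_ad] := quad_xy_frame.
apply: (not_liftable_of_rigid (mem_cover aQ (pt_in_linel ab)) (mem_cover aQ (pt_in_linel ad))
          xy_ab xy_ad) => z cv.
by exists (z (pt ab)), (z (pt ad)); exact: quad_rigid.
Qed.

End FourLines.

Lemma not_liftable_many_lines n (Q : {set {set pts n}}) :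
  (2 < n)%N -> Q \subset Lines n -> (3 < #|Q|)%N -> ~ liftable_LnQ Q.
Proof.
move=> n_gt2 QL; rewrite card_line_idx // => /exists_uniq4[a [b [c [d [abcd idxQ]]]]].
have inQ i : i \in [:: a; b; c; d] -> line i \in Q by move/idxQ; rewrite inE.
move: abcd; rewrite /= !inE !negb_or => /and4P[/and3P[ab ac ad] /andP[bc bd] cd _].
by apply: not_liftable_four_lines QL _ _ _ _ ab ac ad bc bd cd; apply: inQ; rewrite !inE eqxx ?orbT.
Qed.

Theorem lemma6p4 (n : nat) (hn : (4 <= n)%N) (P : {set {set {set pts n}}}) :
  partition P (Lines n) ->
  (nice P <-> forall Q, Q \in P -> #|Q| \notin [:: 2; 3; n.-1]%N).
Proof.
case/and3P=> /eqP coverP _ _.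
have QL Q : Q \in P -> Q \subset Lines n by move=> QP; rewrite -coverP; exact: bigcup_sup.
have n_gt2 : (2 < n)%N by apply: leq_trans hn.
have covers Q QP := covers_other_line n_gt2 (QL Q QP).
split=> [[not_lift no_cover] Q QP | card_ok].
  rewrite !inE; apply/negP => /or3P[] /eqP cardQ.
  - by apply: (not_lift Q QP); [rewrite cardQ | exact: liftable_two_lines hn (QL Q QP) cardQ].
  - have [n4 | n_neq4] := eqVneq n 4.
      have [|l [lL lQ lcov]] := (covers Q QP).2; first by rewrite cardQ n4.
      by apply: no_cover; exists Q, l.
    apply: (not_lift Q QP); first by rewrite cardQ.
    by apply: liftable_three_lines (QL Q QP) cardQ; rewrite ltn_neqAle eq_sym n_neq4.
  - have [l [lL lQ lcov]] := (covers Q QP).2 cardQ.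
    by apply: no_cover; exists Q, l.
split=> [Q QP Q_ge2 | [Q [l [QP lL lQ lcov]]]].
  apply: not_liftable_many_lines n_gt2 (QL Q QP) _.
  by move: (card_ok Q QP) Q_ge2; rewrite !inE; case: #|Q| => [|[|[|[|k]]]].
have cardQ : #|Q| = n.-1 by apply/(covers Q QP); exists l.
by have := card_ok Q QP; rewrite cardQ !inE eqxx !orbT.
Qed.
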